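(* Let $G=(V,E)$ be a reduced undirected graph (parallel edges allowed) with terminals $s,t$. Every feedback edge set $F\subseteq E$ of $G$ is a tracking edge set for $G$.
   Context: An $s$-$t$ path is a simple path from $s$ to $t$. A set $T\subseteq E$ is a tracking edge set if for any two distinct $s$-$t$ paths $P_1,P_2$, the sequence of edges of $T\cap E(P_1)$ in the order traversed along $P_1$ differs from the sequence of edges of $T\cap E(P_2)$ in the order traversed along $P_2$. A graph is reduced if every vertex and every edge lies on at least one $s$-$t$ path. A feedback edge set is a set of edges whose removal makes the graph acyclic. *)

(* Undirected multigraph: finite vertex type V, finite edge
   type E, each edge e has an (unordered) pair of endpoints given by ends e. *)
From mathcomp Require Import all_boot.
Set Implicit Arguments. Unset Strict Implicit. Unset Printing Implicit Defensive.

Section Graph.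
Variables (V E : finType) (ends : E -> V * V).

Definition joins (e : E) (x y : V) : bool :=
  (ends e == (x, y)) || (ends e == (y, x)).

Fixpoint is_walk (v : V) (vs : seq V) (es : seq E) : bool :=
  match vs, es with
  | [::], [::] => true
  | w :: vs', e :: es' => joins e v w && is_walk w vs' es'
  | _, _ => false
  end.

(* A walk is the pair (vertex sequence v0 :: vs, edge sequence es). *)
Definition walk := (V * seq V * seq E)%type.

Definition is_st_path (s t : V) (P : walk) : bool :=
  let: (v0, vs, es) := P in
  [&& v0 == s, last v0 vs == t, is_walk v0 vs es & uniq (v0 :: vs)].

Definition is_cycle (P : walk) : bool :=
  let: (v0, vs, es) := P in
  [&& es != [::], is_walk v0 vs es, last v0 vs == v0, uniq vs & uniq es].

Definition path_edges (P : walk) : seq E := P.2.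
Definition path_vertices (P : walk) : seq V := P.1.1 :: P.1.2.

Definition reduced (s t : V) : Prop :=
  (forall v : V, exists P, is_st_path s t P /\ v \in path_vertices P) /\
  (forall e : E, exists P, is_st_path s t P /\ e \in path_edges P).

Definition feedback_edge_set (F : {set E}) : Prop :=
  forall C : walk, is_cycle C -> has (fun e => e \in F) (path_edges C).

Definition tracking_edge_set (s t : V) (T : {set E}) : Prop :=
  forall P1 P2 : walk, is_st_path s t P1 -> is_st_path s t P2 -> P1 <> P2 ->
    [seq e <- path_edges P1 | e \in T] <> [seq e <- path_edges P2 | e \in T].

End Graph.

From Pilot Require Import Defs.
From mathcomp Require Import all_boot.
Set Implicit Arguments. Unset Strict Implicit. Unset Printing Implicit Defensive.

(* Removing F leaves a forest, so two simple paths from x to the same vertex that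
   use no F-edge coincide.  Compare two simple s-t paths with the same F-sequence
   at their first F-edge f.  If both reach f at the same vertex, their prefixes
   coincide and we recurse.  Otherwise they cross f in opposite directions, the
   first from a1 to a2, the second from a2 to a1.  Let M be the set of vertices
   common to the forest prefixes from s to a1 and to a2: the tree path between a1
   and a2 meets M, so a1 and a2 lie in different components of G - F - M.  Yet the
   remainders of both paths avoid M by simplicity, follow the same F-sequence and
   end at the same vertex, which forces their starting points a2 and a1 into the
   same component of G - F - M. *)

Section Walks.
Variables (V E : finType) (ends : E -> V * V).
Notation joins := (joins ends).
Notation is_walk := (is_walk ends).

Lemma joinsC e x y : joins e x y = joins e y x.
Proof. by rewrite /Defs.joins orbC. Qed.

Lemma joins_inj e x y y' : joins e x y -> joins e x y' -> y = y'.
Proof. by rewrite /Defs.joins => /orP[] /eqP -> /orP[] /eqP [] //; congruence. Qed.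

Lemma joins_flip e x y x' y' : joins e x y -> joins e x' y' -> x != x' ->
  x = y' /\ y = x'.
Proof.
rewrite /Defs.joins => /orP[] /eqP -> /orP[] /eqP [] -> -> //; by rewrite eqxx.
Qed.

Lemma size_walk x vs es : is_walk x vs es -> size vs = size es.
Proof.
by elim: es x vs => [|e es IH] x [|w vs] //= /andP[_ /IH ->].
Qed.

Lemma walk_rcons x vs es w e : size vs = size es ->
  is_walk x (rcons vs w) (rcons es e) = is_walk x vs es && joins e (last x vs) w.
Proof.
elim: vs es x => [|v vs IH] [|e' es] x //=; first by rewrite andbT.
by move=> [/IH ->]; rewrite andbA.
Qed.

Lemma walk_endpoint x vs es e y z : is_walk x vs es -> e \in es -> joins e y z ->
  y \in x :: vs.
Proof.
elim: es x vs => [|e0 es IH] x [|w vs] //= /andP[J W].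
rewrite inE => /orP[/eqP -> | e_es Je]; last by rewrite inE (IH _ _ W e_es Je) orbT.
move: J; rewrite /Defs.joins => /orP[] /eqP -> /orP[] /eqP [] -> ->;
  by rewrite !inE eqxx ?orbT.
Qed.

Lemma uniq_walk_edges x vs es : is_walk x vs es -> uniq (x :: vs) -> uniq es.
Proof.
elim: es x vs => [|e es IH] x [|w vs] //= /andP[J W] /andP[xNvs U].
rewrite (IH _ _ W U) andbT; apply: contra xNvs => e_es.
exact: walk_endpoint W e_es J.
Qed.

Lemma walk_head_edge x w vs e0 es e y : is_walk x (w :: vs) (e0 :: es) ->
  uniq (x :: w :: vs) -> e \in e0 :: es -> joins e x y -> y = w.
Proof.
move=> /= /andP[J0 W] /andP[xNvs _]; rewrite inE => /orP[/eqP -> | e_es J].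
  by move/(joins_inj J0).
by rewrite (walk_endpoint W e_es J) in xNvs.
Qed.

End Walks.

Section Forest.
Variables (V E : finType) (ends : E -> V * V) (F : {set E}).
Hypothesis HF : feedback_edge_set ends F.
Notation joins := (joins ends).
Notation is_walk := (is_walk ends).

Definition forest_adj : rel V := fun x y => [exists e, (e \notin F) && joins e x y].

Lemma forest_adj_sym : symmetric forest_adj.
Proof.
by move=> x y; apply/existsP/existsP => -[e /andP[eNF J]]; exists e; rewrite eNF joinsC.
Qed.

(* The loops and the pairs of parallel edges are the cycles of length 1 and 2. *)
Lemma forest_edge_unique e e' x y : e \notin F -> e' \notin F ->
  joins e x y -> joins e' x y -> e = e'.
Proof.
move=> eNF e'NF J J'; have [Exy|xy] := eqVneq x y.
  subst y; have := @HF (x, [:: x], [:: e]).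
  by rewrite /= J eqxx orbF => /(_ isT) eF; rewrite eF in eNF.
apply/eqP; apply: contraT => ee'.
have := @HF (x, [:: y; x], [:: e; e']).
rewrite /= J -joinsC J' eqxx /= !inE eq_sym xy ee' orbF => /(_ isT) /orP[] eF.
- by rewrite eF in eNF.
- by rewrite eF in e'NF.
Qed.

Lemma forest_walk_path x vs es : is_walk x vs es -> all [predC F] es ->
  path forest_adj x vs.
Proof.
elim: es x vs => [|e es IH] x [|w vs] //= /andP[J W] /andP[eNF A].
by rewrite (IH _ _ W A) andbT; apply/existsP; exists e; rewrite eNF.
Qed.

Lemma forest_path_walk x vs : path forest_adj x vs ->
  exists2 es, is_walk x vs es & all [predC F] es.
Proof.
elim: vs x => [|w vs IH] x /=; first by exists [::].
move=> /andP[/existsP[e /andP[eNF J]] /IH[es W A]].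
by exists (e :: es); rewrite /= ?J ?W ?eNF.
Qed.

Lemma forest_walk_edges_unique x vs es1 es2 : is_walk x vs es1 -> is_walk x vs es2 ->
  all [predC F] es1 -> all [predC F] es2 -> es1 = es2.
Proof.
elim: vs x es1 es2 => [|w vs IH] x [|e1 es1] [|e2 es2] //= /andP[J1 W1] /andP[J2 W2].
move=> /andP[e1NF A1] /andP[e2NF A2].
by rewrite (forest_edge_unique e1NF e2NF J1 J2) (IH _ _ _ W1 W2 A1 A2).
Qed.

Lemma forest_cycle_free x O : uniq (x :: O) -> 1 < size O ->
  ~~ path forest_adj x (rcons O x).
Proof.
move=> UO O2; apply/negP; rewrite rcons_path.
move=> /andP[/forest_path_walk[es W A] /existsP[e /andP[eNF J]]].
have eNes : e \notin es.
  case: O UO O2 W J => [|c1 [|c2 O]] // UO _ W J; apply/negP => e_es.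
  case: es W e_es {A} => // e0 es W e_es.
  rewrite joinsC in J; have /= Ec1 := walk_head_edge W UO e_es J.
  by move: UO; rewrite /= -Ec1 mem_last !andbF.
have := @HF (x, rcons O x, rcons es e).
rewrite /= walk_rcons ?(size_walk W) // W J last_rcons eqxx !rcons_uniq eNes.
rewrite (uniq_walk_edges W UO) -size_eq0 size_rcons andbT.
move: UO => /= /andP[-> ->] /(_ isT); rewrite -cats1 has_cat /= orbF.
by rewrite (negPf eNF) orbF; apply/negP; rewrite -all_predC.
Qed.

Lemma forest_disjoint_paths x z P Q : uniq (x :: rcons P z) -> uniq (x :: rcons Q z) ->
  ~~ has (mem Q) P -> path forest_adj x (rcons P z) -> path forest_adj x (rcons Q z) ->
  P = [::] /\ Q = [::].
Proof.
move=> UP UQ PQ pP pQ; set O := P ++ z :: rev Q.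
have UO : uniq (x :: O).
  move: UP UQ; rewrite /O /= !mem_rcons !rcons_uniq !inE !negb_or.
  move=> /and3P[/andP[xz xP] zP UP] /and3P[/andP[_ xQ] zQ UQ].
  rewrite mem_cat inE mem_rev !negb_or xz xP xQ cat_uniq UP /= mem_rev zQ rev_uniq UQ.
  by rewrite (negPf zP) has_rev has_sym (negPf PQ).
have pO : path forest_adj x (rcons O x).
  rewrite /O rcons_cat -cat_rcons cat_path pP last_rcons /=.
  have := rev_path forest_adj x (rcons Q z).
  rewrite last_rcons belast_rcons rev_cons => ->.
  by rewrite (eq_path (e' := forest_adj)) // => a b; rewrite forest_adj_sym.
have := contraL (forest_cycle_free UO) pO.
rewrite -leqNgt /O size_cat /= size_rev addnS ltnS leqn0 addn_eq0 !size_eq0.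
by case/andP => /eqP-> /eqP->.
Qed.

Lemma forest_path_unique x p q : uniq (x :: p) -> uniq (x :: q) ->
  path forest_adj x p -> path forest_adj x q -> last x p = last x q -> p = q.
Proof.
elim: p x q => [|y p IH] x [|y' q] //.
- by move=> _ /andP[xNq _] _ _ /= Lq; rewrite Lq mem_last in xNq.
- by move=> /andP[xNp _] _ _ _ /= Lp; rewrite -Lp mem_last in xNp.
have [<- /= /andP[_ Up] /andP[_ Uq] /andP[_ Pp] /andP[_ Pq] L|yy'] := eqVneq y y'.
  by rewrite (IH y q).
move=> Up Uq Pp Pq /= L.
have meet : has (mem (y' :: q)) (y :: p).
  by apply/hasP; exists (last y p); rewrite /= ?mem_last // L mem_last.
move: Up Pp meet; move Ep: (y :: p) => P Up Pp meet.
case: (split_find meet) Ep Up Pp => z P1 P2 zQ P1NQ Ep Up Pp.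
move: Uq Pq zQ P1NQ; move Eq: (y' :: q) => Q Uq Pq zQ P1NQ.
case/splitPr: zQ Eq Uq Pq P1NQ => Q1 Q2 Eq Uq Pq P1NQ.
have [P1nil Q1nil] : P1 = [::] /\ Q1 = [::].
  apply: (@forest_disjoint_paths x z).
  - by move: Up; rewrite -cat_cons cat_uniq => /andP[].
  - by move: Uq; rewrite -cat_rcons -cat_cons cat_uniq => /andP[].
  - by move: P1NQ; rewrite has_sym has_cat negb_or has_sym => /andP[].
  - by move: Pp; rewrite cat_path => /andP[].
  - by move: Pq; rewrite -cat_rcons cat_path => /andP[].
move: Ep Eq yy'; rewrite P1nil Q1nil => -[-> _] [-> _].
by rewrite eqxx.
Qed.

Definition trace (es : seq E) : seq E := [seq e <- es | e \in F].

Lemma trace_nil es : trace es = [::] -> all [predC F] es.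
Proof. by move=> T; rewrite all_predC has_filter -/(trace es) T. Qed.

Lemma walk_split_trace x vs es f sig : is_walk x vs es -> trace es = f :: sig ->
  exists A Ae b B Be, [/\ vs = A ++ b :: B, es = Ae ++ f :: Be, is_walk x A Ae,
    all [predC F] Ae & [/\ joins f (last x A) b, is_walk b B Be & trace Be = sig]].
Proof.
elim: es x vs => [|e es IH] x [|w vs] //= /andP[J W]; rewrite {1}/trace /=.
case: ifP => [_ [<- Tes] | eNF Tes]; first by exists [::], [::], w, vs, es.
have [A [Ae [b [B [Be [-> -> WA FA [Jf WB TB]]]]]]] := IH _ _ W Tes.
by exists (w :: A), (e :: Ae), b, B, Be; rewrite /= J WA eNF FA.
Qed.

Definition avoid_adj (M : pred V) : rel V :=
  fun a b => [&& ~~ M a, ~~ M b & forest_adj a b].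

Lemma connect_avoid_sym M : connect_sym (avoid_adj M).
Proof.
by apply: sym_connect_sym => a b; rewrite /avoid_adj forest_adj_sym andbCA.
Qed.

Lemma avoid_path_notin M a r : path (avoid_adj M) a r -> all (predC M) r.
Proof. by elim: r a => //= b r IH a /andP[/and3P[_ -> _] /IH]. Qed.

Lemma connect_avoid_walk M x vs es : is_walk x vs es -> all [predC F] es ->
  all (predC M) (x :: vs) -> connect (avoid_adj M) x (last x vs).
Proof.
move=> W A MN; apply/connectP; exists vs => //.
elim: es x vs W A MN => [|e es IH] x [|w vs] //= /andP[J W] /andP[eNF A].
move=> /and3P[xM wM MN]; rewrite (IH _ _ W A) /= ?wM // andbT /avoid_adj xM wM.
by apply/existsP; exists e; rewrite eNF.
Qed.

(* A shared F-edge is crossed either from the same endpoint or in opposite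
   directions; either way, connected heads before it follow from connected heads
   after it. *)
Lemma connect_avoid_of_trace M sig : forall u v vs1 es1 vs2 es2,
  is_walk u vs1 es1 -> is_walk v vs2 es2 -> trace es1 = sig -> trace es2 = sig ->
  all (predC M) (u :: vs1) -> all (predC M) (v :: vs2) -> last u vs1 = last v vs2 ->
  connect (avoid_adj M) u v.
Proof.
elim: sig => [|f sig IH] u v vs1 es1 vs2 es2 W1 W2 T1 T2 M1 M2 L.
  apply: connect_trans (connect_avoid_walk W1 (trace_nil T1) M1) _.
  by rewrite L connect_avoid_sym (connect_avoid_walk W2 (trace_nil T2) M2).
have [A1 [Ae1 [b1 [B1 [Be1 [Evs1 Ees1 WA1 FA1 [J1 WB1 TB1]]]]]]] := walk_split_trace W1 T1.
have [A2 [Ae2 [b2 [B2 [Be2 [Evs2 Ees2 WA2 FA2 [J2 WB2 TB2]]]]]]] := walk_split_trace W2 T2.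
move: M1 M2 L; rewrite Evs1 Evs2 -!cat_cons !all_cat !last_cat /=.
move=> /and3P[MA1 Mb1 MB1] /and3P[MA2 Mb2 MB2] L.
have Cb : connect (avoid_adj M) b1 b2.
  by apply: (IH _ _ _ _ _ _ WB1 WB2) => //=; rewrite ?Mb1 ?Mb2.
apply: connect_trans (connect_avoid_walk WA1 FA1 MA1) _.
rewrite connect_avoid_sym; apply: connect_trans (connect_avoid_walk WA2 FA2 MA2) _.
have [->|Na] := eqVneq (last u A1) (last v A2); first exact: connect0.
have [-> <-] := joins_flip J1 J2 Na.
exact: Cb.
Qed.

Lemma forest_prefixes_separated x p q :
  uniq (x :: p) -> uniq (x :: q) -> path forest_adj x p -> path forest_adj x q ->
  last x q \notin x :: p ->
  ~~ connect (avoid_adj [pred z | (z \in x :: p) && (z \in x :: q)]) (last x q) (last x p).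
Proof.
set M := [pred z | _]; set a := last x q.
move=> Up Uq Pp Pq aNp; apply/negP => /connectP[r0 Pr0].
case: (shortenP Pr0) => r Pr Ur _ Lr.
have RM : all (predC M) (a :: r) by rewrite /= (avoid_path_notin Pr) andbT (negPf aNp).
have xNR : x \notin a :: r by apply/negP => /(allP RM); rewrite /= !mem_head.
have meet : has (mem (a :: r)) q.
  apply/hasP; exists a; last exact: mem_head.
  have := mem_last x q; rewrite -/a inE => /orP[/eqP ax|//].
  by rewrite ax mem_head in xNR.
have SR : sorted (avoid_adj M) (a :: r) := Pr.
have LR : last x p = last a (a :: r) := Lr.
move: (a :: r) RM Ur SR LR meet xNR => R RM UR SR LR meet xNR.
move: Pq Uq meet; move Eq: q => Q Pq Uq meet.
case: (split_find meet) Eq Pq Uq => z B B2 zR BNR Eq Pq Uq.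
case/splitPr: zR RM UR SR LR xNR BNR => R1 R2 RM UR SR LR xNR BNR.
(* z is the first vertex of q on the connecting path R: following q up to z and
   then R gives a forest path to the end of p, hence p itself. *)
have Ep : p = B ++ z :: R2.
  apply: (@forest_path_unique x) => //.
  - rewrite -cat_cons cat_uniq has_sym.
    move: Uq; rewrite cat_rcons -cat_cons cat_uniq => /andP[-> _].
    move: UR; rewrite cat_uniq => /and3P[_ _ ->].
    rewrite mem_cat negb_or in xNR; case/andP: xNR => _ xNR.
    rewrite has_sym has_cat negb_or in BNR; case/andP: BNR => _ BNR.
    by rewrite has_sym in BNR; rewrite andbT /= negb_or xNR BNR.
  - rewrite -cat_rcons cat_path last_rcons.
    move: Pq; rewrite cat_path => /andP[-> _] /=.
    move: SR; rewrite sorted_cat_cons => /andP[_].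
    by apply: sub_path => u w /and3P[].
  - by rewrite LR !last_cat.
have zM : M z.
  by rewrite inE /= Ep Eq cat_rcons -!cat_cons !mem_cat !mem_head !orbT.
by move/allP: RM => /(_ z); rewrite mem_cat mem_head orbT => /(_ isT) /negP.
Qed.

Lemma simple_walk_trace_inj sig : forall x vs1 es1 vs2 es2,
  is_walk x vs1 es1 -> is_walk x vs2 es2 -> uniq (x :: vs1) -> uniq (x :: vs2) ->
  trace es1 = sig -> trace es2 = sig -> last x vs1 = last x vs2 ->
  vs1 = vs2 /\ es1 = es2.
Proof.
elim: sig => [|f sig IH] x vs1 es1 vs2 es2 W1 W2 U1 U2 T1 T2 L.
  have [F1 F2] := (trace_nil T1, trace_nil T2).
  have Evs := forest_path_unique U1 U2 (forest_walk_path W1 F1) (forest_walk_path W2 F2) L.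
  by subst vs2; rewrite (forest_walk_edges_unique W1 W2 F1 F2).
have [A1 [Ae1 [b1 [B1 [Be1 [E1 -> WA1 FA1 [J1 WB1 TB1]]]]]]] := walk_split_trace W1 T1.
have [A2 [Ae2 [b2 [B2 [Be2 [E2 -> WA2 FA2 [J2 WB2 TB2]]]]]]] := walk_split_trace W2 T2.
subst vs1 vs2; move: U1 U2 L; rewrite -!cat_cons !cat_uniq !last_cat.
move=> /and3P[UA1 D1 UB1] /and3P[UA2 D2 UB2] /= L.
have [PA1 PA2] := (forest_walk_path WA1 FA1, forest_walk_path WA2 FA2).
have [Ea|Na] := eqVneq (last x A1) (last x A2).
  have EA := forest_path_unique UA1 UA2 PA1 PA2 Ea; subst A2.
  have Eb := joins_inj J1 J2; subst b2.
  rewrite (forest_walk_edges_unique WA1 WA2 FA1 FA2).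
  by have [-> ->] := IH _ _ _ _ _ WB1 WB2 UB1 UB2 TB1 TB2 L.
have [Eb2 Eb1] := joins_flip J1 J2 Na.
exfalso; have b1NA1 : b1 \notin x :: A1 by move: D1; rewrite /= negb_or => /andP[].
have := forest_prefixes_separated UA1 UA2 PA1 PA2.
rewrite -Eb1 Eb2 => /(_ b1NA1) /negP; apply.
apply: (connect_avoid_of_trace WB1 WB2 TB1 TB2 _ _ L).
- apply/allP => z zB1; move/hasPn: D1 => /(_ z zB1).
  by apply: contra => /andP[].
- apply/allP => z zB2; move/hasPn: D2 => /(_ z zB2).
  by apply: contra => /andP[].
Qed.

End Forest.

Theorem mainTheorem11 (V E : finType) (ends : E -> V * V) (s t : V)
  (Hred : reduced ends s t) (F : {set E}) (HF : feedback_edge_set ends F) :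
  tracking_edge_set ends s t F.
Proof.
move=> [[x1 vs1] es1] [[x2 vs2] es2] /and4P[/eqP-> /eqP L1 W1 U1].
move=> /and4P[/eqP-> /eqP L2 W2 U2] P12 T12; apply: P12.
by have [-> ->] := simple_walk_trace_inj HF W1 W2 U1 U2 T12 erefl (etrans L1 (esym L2)).
Qed.
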